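(* Let $q=2v+1$ be a prime power with $v$ odd, and suppose there exists an $(\mathbb F_q^\Box,\{k_1,\dots,k_n\})$ Heffter difference packing $\{B_1,\dots,B_n\}$. Then there exists a Heffter space over $\mathbb F_q$ with point set $\mathbb F_q^\Box$ and with $k_1+\dots+k_n$ parallel classes, exactly $k_i$ of which consist of blocks of size $k_i$ for each $i$ (counting with multiplicity over equal values of $k_i$), i.e. a $(v,\{k_1^{k_1},\dots,k_n^{k_n}\})$ Heffter space. Moreover, if each $B_i$ admits an ordering whose partial sums are pairwise distinct, then the Heffter space can be taken so that each of its blocks admits an ordering whose partial sums are pairwise distinct.
   Context: $\mathbb F_q^\Box$ denotes the multiplicative group of nonzero squares of $\mathbb F_q$; for $q\equiv3\pmod4$ it is a half-set of the additive group of $\mathbb F_q$, i.e. it contains exactly one of $g,-g$ for each $g\ne0$. Fix a group isomorphism $\phi:\mathbb F_q^\Box\to\mathbb Z_v$. A family $\{B_1,\dots,B_n\}$ of subsets of $\mathbb F_q^\Box$ with $|B_i|=k_i$ is an $(\mathbb F_q^\Box,\{k_1,\dots,k_n\})$ Heffter difference packing if: (H1) the multiset of all differences $a-b$ with $(a,b)$ an ordered pair of distinct elements of a common $\phi(B_i)$, taken over all $i$, has no repeated element in $\mathbb Z_v$; (H2) for each $i$, $k_i$ divides $v$ and the elements of $\phi(B_i)$ are pairwise distinct modulo $k_i$; (H3) each $B_i$ has sum $0$ in $\mathbb F_q$. A $(v,k)$ Heffter system on a half-set $V$ of an abelian group of order $2v+1$ is a partition of $V$ into blocks of size $k$ each summing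 to $0$. A Heffter space over $G$ is a partial linear space (any two distinct points in at most one block) on a half-set $V$ of $G$ with a resolution of its blocks into parallel classes (partitions of $V$), each of which is a Heffter system on $V$. *)

From mathcomp Require Import all_boot all_order all_algebra all_field.
Set Implicit Arguments. Unset Strict Implicit. Unset Printing Implicit Defensive.
Import GRing.Theory.
Local Open Scope ring_scope.

Section Heffter.
Variable F : finFieldType.

Definition nzsquares : {set F} :=
  [set x : F | (x != 0) && [exists y : F, y ^+ 2 == x]].

Definition is_halfset (V : {set F}) : Prop :=
  0 \notin V /\ forall g : F, g != 0 -> ((g \in V) (+) (- g \in V)).

(* phi : F_q^Box -> Z_v is a group isomorphism; Z_v is modelled as
   {0,...,v-1} with addition modulo v. *)
Definition sq_iso (v : nat) (phi : F -> nat) : Prop :=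
  [/\ (forall x, x \in nzsquares -> (phi x < v)%N),
      (forall x y, x \in nzsquares -> y \in nzsquares ->
          phi (x * y) = ((phi x + phi y) %% v)%N),
      {in nzsquares &, injective phi} &
      (forall r, (r < v)%N -> exists2 x, x \in nzsquares & phi x = r)].

Definition zdiff (v a b : nat) : nat := ((a + (v - b)) %% v)%N.

Definition heffter_diff_packing (v : nat) (phi : F -> nat) (n : nat)
    (B : 'I_n -> {set F}) : Prop :=
  [/\ (forall i, B i \subset nzsquares),
      (forall i j a b c d, a \in B i -> b \in B i -> a != b ->
          c \in B j -> d \in B j -> c != d ->
          zdiff v (phi a) (phi b) = zdiff v (phi c) (phi d) ->
          [/\ i = j, a = c & b = d]),
      (forall i, (#|B i| %| v)%N /\
          {in B i &, forall a b, (phi a %% #|B i| = phi b %% #|B i|)%N -> a = b}) &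
      (forall i, \sum_(x in B i) x = 0)].

Definition heffter_system (V : {set F}) (k : nat) (P : {set {set F}}) : Prop :=
  [/\ partition P V,
      (forall b, b \in P -> #|b| = k) &
      (forall b, b \in P -> \sum_(x in b) x = 0)].

(* Blocks of distinct
   classes are distinct (resolution), and two distinct points lie in at most
   one block (partial linear space). *)
Definition heffter_space (V : {set F}) (m : nat)
    (P : 'I_m -> {set {set F}}) (K : 'I_m -> nat) : Prop :=
  [/\ is_halfset V,
      (forall c, heffter_system V (K c) (P c)) &
      (forall c1 c2 b1 b2 x y, b1 \in P c1 -> b2 \in P c2 ->
          x != y -> x \in b1 -> y \in b1 -> x \in b2 -> y \in b2 ->
          c1 = c2 /\ b1 = b2)].

Definition has_distinct_partial_sums (A : {set F}) : Prop :=
  exists s : seq F, perm_eq s (enum A) /\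
    uniq [seq \sum_(x <- take j s) x | j <- iota 1 (size s)].

End Heffter.

(* The parallel classes are dilations of the base blocks by nonzero squares,
   one class for each pair (i, j) with j < k_i.  Since phi(B_i) is a
   transversal of Z_v modulo k_i and k_i divides v, the dilates B_i g with
   phi(g) = j (mod k_i) partition the squares: x = a g forces
   phi(a) = phi(x) - j (mod k_i), which determines a in B_i and then g.
   Dilation preserves zero sums and distinct partial sums.  If two dilates
   B_i g1 and B_l g2 share the points a1 g1 = a2 g2 and b1 g1 = b2 g2, then
   a1 b2 = a2 b1, so phi(a1) - phi(b1) = phi(a2) - phi(b2) in Z_v and (H1)
   gives i = l, a1 = a2, hence g1 = g2.  Finally, as v is odd, -1 is not a
   square, so the squares form a half-set of F. *)

From mathcomp Require Import all_boot all_order all_algebra all_field.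
From mathcomp Require Import fingroup cyclic zify ring.
Set Implicit Arguments. Unset Strict Implicit. Unset Printing Implicit Defensive.
Import GRing.Theory.
Local Open Scope ring_scope.

Lemma natr_card_finField (F : finFieldType) : #|F|%:R = 0 :> F.
Proof.
by have := @expg_cardG F [set: F]%G (GRing.one F) (in_setT _); rewrite cardsT.
Qed.

Lemma oppr1_neq1 (F : finFieldType) : odd #|F| -> -1 != 1 :> F.
Proof.
move=> oddF; apply/eqP => m1E; move/eqP: (oner_neq0 F); apply.
have two0 : 2%:R = 0 :> F by rewrite mulr2n -{1}m1E addNr.
rewrite -(natr_card_finField F) -(odd_double_half #|F|) oddF -muln2.
by rewrite natrD natrM two0 mulr0 addr0.
Qed.

Section NonzeroSquares.
Variable F : finFieldType.
Local Notation S := (nzsquares F).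

Lemma nzsquares_neq0 x : x \in S -> x != 0.
Proof. by rewrite inE => /andP[]. Qed.

Lemma nzsquares1 : 1 \in S.
Proof. by rewrite inE oner_eq0 /=; apply/existsP; exists 1; rewrite expr1n. Qed.

Lemma nzsquaresM x y : x \in S -> y \in S -> x * y \in S.
Proof.
rewrite !inE => /andP[x0 /existsP[a /eqP xE]] /andP[y0 /existsP[b /eqP yE]].
by rewrite mulf_neq0 //=; apply/existsP; exists (a * b); rewrite exprMn xE yE.
Qed.

Lemma nzsquaresV x : x \in S -> x^-1 \in S.
Proof.
rewrite !inE => /andP[x0 /existsP[a /eqP xE]].
by rewrite invr_eq0 x0 /=; apply/existsP; exists a^-1; rewrite exprVn xE.
Qed.

Lemma nzsquares_opp x : -1 \notin S -> x \in S -> - x \notin S.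
Proof.
move=> m1S xS; apply: contra m1S => mxS.
by rewrite -(mulfV (nzsquares_neq0 xS)) -mulNr nzsquaresM ?nzsquaresV.
Qed.

Lemma halfset_nzsquares : -1 \notin S -> #|F| = (2 * #|S|).+1 -> is_halfset S.
Proof.
move=> m1S cardF; split; first by rewrite inE eqxx.
pose NS := [set - x | x in S].
have S_NS0 : S :&: NS = set0.
  apply/setP => y; rewrite in_setI in_set0; apply/negP => /andP[yS /imsetP[x xS yE]].
  by move: yS; rewrite yE (negPf (nzsquares_opp m1S xS)).
have S_NST : S :|: NS = [set~ 0].
  apply/eqP; rewrite eqEcard cardsC1 cardF cardsU S_NS0 cards0 subn0.
  rewrite card_imset; last exact: oppr_inj.
  rewrite mul2n -addnn leqnn andbT; apply/subsetP => y.
  rewrite in_setU in_setC1 => /orP[/nzsquares_neq0 // |].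
  by case/imsetP => x /nzsquares_neq0 x0 ->; rewrite oppr_eq0.
move=> g g0; have : g \in S :|: NS by rewrite S_NST !inE.
rewrite in_setU => /orP[gS | /imsetP[x xS ->]].
  by rewrite gS (negPf (nzsquares_opp m1S gS)).
by rewrite opprK xS (negPf (nzsquares_opp m1S xS)).
Qed.

End NonzeroSquares.

Arguments nzsquares1 {F}.

Section SquareIsomorphism.
Variables (F : finFieldType) (v : nat) (phi : F -> nat).
Hypothesis hphi : sq_iso v phi.
Local Notation S := (nzsquares F).

Lemma sq_iso_mod k x y : (k %| v)%N -> x \in S -> y \in S ->
  phi (x * y) = phi x + phi y %[mod k].
Proof. by case: hphi => _ phiM _ _ kv xS yS; rewrite phiM // modn_dvdm. Qed.

Lemma sq_iso1 : phi 1 = 0%N.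
Proof.
case: hphi => phi_lt phiM _ _; have := phiM 1 1 nzsquares1 nzsquares1.
have := phi_lt 1 nzsquares1; rewrite mulr1; set p := phi 1 => pv pE.
have /eqP : p + p = 0 + p %[mod v] by rewrite -pE modn_small.
by rewrite eqn_modDr mod0n modn_small // => /eqP.
Qed.

Lemma card_nzsquares : #|S| = v.
Proof.
case: hphi => phi_lt _ phi_inj phi_onto.
have /perm_size : perm_eq [seq phi x | x in S] (iota 0 v).
  apply: uniq_perm; rewrite ?iota_uniq //.
    by rewrite map_inj_in_uniq ?enum_uniq // => x y; rewrite !mem_enum; apply: phi_inj.
  move=> r; rewrite mem_iota add0n; apply/mapP/idP => [[x]|rv].
    by rewrite mem_enum => xS ->; apply: phi_lt.
  by have [x xS <-] := phi_onto r rv; exists x; rewrite ?mem_enum.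
by rewrite size_map size_iota -cardE.
Qed.

Lemma oppr1_notin_nzsquares : odd #|F| -> odd v -> -1 \notin S.
Proof.
case: hphi => phi_lt phiM phi_inj _ oddF oddv; apply/negP => m1S.
have := phiM _ _ m1S m1S; rewrite mulrNN mulr1 sq_iso1 => /esym/eqP.
rewrite addnn -muln2 -/(dvdn v _) Gauss_dvdl ?coprimen2 //.
rewrite /dvdn modn_small ?phi_lt // => /eqP; rewrite -sq_iso1.
by move/(phi_inj _ _ m1S nzsquares1)/eqP; apply/negP/oppr1_neq1.
Qed.

End SquareIsomorphism.

Section Dilation.
Variable F : finFieldType.
Implicit Types (A : {set F}) (g : F).

Definition dilate A g : {set F} := [set x * g | x in A].

Lemma card_dilate A g : g != 0 -> #|dilate A g| = #|A|.
Proof. by move=> g0; rewrite card_imset //; apply: mulIf. Qed.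

Lemma sum_dilate A g : \sum_(x in dilate A g) x = (\sum_(x in A) x) * g.
Proof.
have [-> | g0] := eqVneq g 0.
  by rewrite mulr0 big1 // => _ /imsetP[x _ ->]; rewrite mulr0.
by rewrite big_imset /= ?mulr_suml // => x y _ _; apply: mulIf.
Qed.

Lemma dilate_nzsquares A g :
  A \subset nzsquares F -> g \in nzsquares F -> dilate A g \subset nzsquares F.
Proof.
by move=> /subsetP AS gS; apply/subsetP => _ /imsetP[x /AS xS ->]; apply: nzsquaresM.
Qed.

Lemma dilate_distinct_partial_sums A g : g != 0 ->
  has_distinct_partial_sums A -> has_distinct_partial_sums (dilate A g).
Proof.
move=> g0 [s [sA us]]; have mulg_inj := mulIf g0.
have sAE : s =i A by move=> x; rewrite (perm_mem sA) mem_enum.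
exists [seq x * g | x <- s]; split.
  apply: uniq_perm; rewrite ?enum_uniq ?map_inj_uniq ?(perm_uniq sA) ?enum_uniq //.
  move=> y; rewrite mem_enum; apply/mapP/imsetP => -[x];
    by rewrite ?sAE => xA ->; exists x; rewrite ?sAE.
rewrite size_map; rewrite -(map_inj_uniq mulg_inj) -map_comp in us.
congr (uniq _): us; apply: eq_map => j /=.
by rewrite -map_take big_map mulr_suml.
Qed.

End Dilation.

Lemma residue_transversal_onto (T : finType) (A : {set T}) (f : T -> nat) :
  (0 < #|A|)%N -> {in A &, forall a b, f a = f b %[mod #|A|] -> a = b} ->
  forall r, exists2 a, a \in A & f a = r %[mod #|A|].
Proof.
move=> A_gt0 f_inj r; pose res a : 'I_#|A| := Ordinal (ltn_pmod (f a) A_gt0).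
have resAT : res @: A = setT.
  apply/eqP; rewrite eqEcard subsetT cardsT card_ord card_in_imset ?leqnn //.
  by move=> a b aA bA /(congr1 val); apply: f_inj.
have : Ordinal (ltn_pmod r A_gt0) \in res @: A by rewrite resAT inE.
by case/imsetP => a aA /(congr1 val) /esym; exists a.
Qed.

Section DilationClass.
Variables (F : finFieldType) (v : nat) (phi : F -> nat) (A : {set F}) (j : nat).
Hypotheses (hphi : sq_iso v phi) (A_sub : A \subset nzsquares F)
  (k_dvd_v : (#|A| %| v)%N)
  (A_transversal : {in A &, forall a b, phi a = phi b %[mod #|A|] -> a = b})
  (j_lt_k : (j < #|A|)%N).
Local Notation S := (nzsquares F).
Local Notation k := #|A|.

Definition dilate_class : {set {set F}} :=
  [set dilate A g | g in [set g in S | (phi g %% k == j)%N]].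

Let A_S a : a \in A -> a \in S. Proof. exact: (subsetP A_sub). Qed.

Lemma cover_dilate_class : cover dilate_class = S.
Proof.
apply/setP => x; apply/bigcupP/idP => [[_ /imsetP[g /setIdP[gS _] ->]]|xS].
  exact: (subsetP (dilate_nzsquares A_sub gS)).
have [a aA aE] := residue_transversal_onto (leq_ltn_trans (leq0n j) j_lt_k)
  A_transversal (phi x + (k - j)).
have aS := A_S aA; have gS : a^-1 * x \in S by rewrite nzsquaresM ?nzsquaresV.
have agE : a * (a^-1 * x) = x by rewrite mulVKf ?nzsquares_neq0.
exists (dilate A (a^-1 * x)); last by apply/imsetP; exists a.
apply/imsetP; exists (a^-1 * x) => //; rewrite inE gS /=.
have := sq_iso_mod hphi k_dvd_v aS gS; rewrite agE => xE.
rewrite -(modn_small j_lt_k) -(eqn_modDl (phi a)) -xE -modnDml aE modnDml.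
by rewrite -addnA subnK ?modnDr // ltnW.
Qed.

Lemma trivIset_dilate_class : trivIset dilate_class.
Proof.
apply/trivIsetP => b1 b2 /imsetP[g1 /setIdP[g1S /eqP g1j] ->].
move=> /imsetP[g2 /setIdP[g2S /eqP g2j] ->] {b1 b2}; apply: contraNT.
rewrite -setI_eq0 => /set0Pn[x /setIP[/imsetP[a1 a1A xE1] /imsetP[a2 a2A xE2]]].
have a12 : phi a1 = phi a2 %[mod k].
  apply/eqP; rewrite -(eqn_modDr (phi g1)).
  rewrite -(sq_iso_mod hphi k_dvd_v (A_S a1A) g1S) -xE1 xE2.
  by rewrite (sq_iso_mod hphi k_dvd_v (A_S a2A) g2S) -modnDmr g2j -g1j modnDmr.
move: xE1; rewrite xE2 (A_transversal a1A a2A a12).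
by move=> /(mulfI (nzsquares_neq0 (A_S a2A))) ->.
Qed.

Lemma set0_notin_dilate_class : set0 \notin dilate_class.
Proof.
apply/imsetP => -[g /setIdP[gS _] /esym/eqP].
rewrite -cards_eq0 card_dilate ?nzsquares_neq0 // => /eqP k0.
by move: j_lt_k; rewrite k0.
Qed.

Lemma heffter_system_dilate_class :
  \sum_(x in A) x = 0 -> heffter_system S k dilate_class.
Proof.
move=> A_sum; split.
- apply/and3P; rewrite cover_dilate_class trivIset_dilate_class.
  by rewrite set0_notin_dilate_class.
- by move=> _ /imsetP[g /setIdP[gS _] ->]; rewrite card_dilate ?nzsquares_neq0.
- by move=> _ /imsetP[g _ ->]; rewrite sum_dilate A_sum mul0r.
Qed.

End DilationClass.

Lemma eq_zdiff (v a b c d : nat) : (b <= v)%N -> (d <= v)%N ->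
  a + d = c + b %[mod v] -> zdiff v a b = zdiff v c d.
Proof.
move=> bv dv adE; apply/eqP; rewrite -(eqn_modDr (b + d)).
have -> : (a + (v - b) + (b + d) = a + d + v)%N by lia.
have -> : (c + (v - d) + (b + d) = c + b + v)%N by lia.
by rewrite !modnDr adE.
Qed.

Section PackingDilations.
Variables (F : finFieldType) (v : nat) (phi : F -> nat) (n : nat) (B : 'I_n -> {set F}).
Hypotheses (hphi : sq_iso v phi) (hB : heffter_diff_packing v phi B).
Local Notation S := (nzsquares F).

Lemma dilate_packing_pair_unique i1 i2 g1 g2 x y :
    g1 \in S -> g2 \in S -> x != y ->
    x \in dilate (B i1) g1 -> y \in dilate (B i1) g1 ->
    x \in dilate (B i2) g2 -> y \in dilate (B i2) g2 -> i1 = i2 /\ g1 = g2.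
Proof.
case: hphi => phi_lt phiM _ _; case: hB => B_sub B_diff _ _.
have BS i : {subset B i <= S} by apply/subsetP.
move=> g1S g2S xy /imsetP[a1 a1B xE1] /imsetP[b1 b1B yE1].
move=> /imsetP[a2 a2B xE2] /imsetP[b2 b2B yE2].
have a1S := BS _ _ a1B; have b1S := BS _ _ b1B.
have a2S := BS _ _ a2B; have b2S := BS _ _ b2B.
have ab1 : a1 != b1 by apply: contraNneq xy => ab; rewrite xE1 yE1 ab.
have ab2 : a2 != b2 by apply: contraNneq xy => ab; rewrite xE2 yE2 ab.
have crossE : a1 * b2 = a2 * b1.
  apply: (mulIf (mulf_neq0 (nzsquares_neq0 g1S) (nzsquares_neq0 g2S))).
  transitivity ((a1 * g1) * (b2 * g2)); first by ring.
  by rewrite -xE1 -yE2 xE2 yE1; ring.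
have := congr1 phi crossE; rewrite !phiM // => /eq_zdiff zE.
have [<- a12 _] := B_diff _ _ _ _ _ _ a1B b1B ab1 a2B b2B ab2
  (zE (ltnW (phi_lt _ b1S)) (ltnW (phi_lt _ b2S))).
by split=> //; apply: (mulfI (nzsquares_neq0 a1S)); rewrite -xE1 xE2 a12.
Qed.

End PackingDilations.

Section TaggedOrdinals.
Variables (n : nat) (k : 'I_n -> nat).
Local Notation tagged_ord := {i : 'I_n & 'I_(k i)}.

Lemma card_tagged_ord : #|{: tagged_ord}| = (\sum_(i < n) k i)%N.
Proof.
by rewrite card_tagged sumnE big_map big_enum; apply: eq_bigr => i _; rewrite card_ord.
Qed.

Definition tag_of_ord (c : 'I_(\sum_(i < n) k i)) : tagged_ord :=
  enum_val (cast_ord (esym card_tagged_ord) c).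

Lemma tag_of_ord_bij : bijective tag_of_ord.
Proof.
exists (fun t => cast_ord card_tagged_ord (enum_rank t)) => [c | t].
  by rewrite /tag_of_ord enum_valK cast_ordKV.
by rewrite /tag_of_ord cast_ordK enum_rankK.
Qed.

Lemma card_tag_of_ord_size s :
  #|[set c | k (tag (tag_of_ord c)) == s]| = (\sum_(i < n | k i == s) k i)%N.
Proof.
have -> : [set c | k (tag (tag_of_ord c)) == s] =
          tag_of_ord @^-1: [set t : tagged_ord | k (tag t) == s].
  by apply/setP => c; rewrite !inE.
rewrite (on_card_preimset (onW_bij _ tag_of_ord_bij)) -sum1_card.
rewrite (eq_bigl (fun t : tagged_ord => (k (tag t) == s) && true)) => [|t]; last first.
  by rewrite inE andbT.
rewrite -(sig_big_dep (fun i => k i == s) (fun i _ => true) (fun _ _ => 1%N)) /=.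
by apply: eq_bigr => i _; rewrite sum1_card card_ord.
Qed.

End TaggedOrdinals.

Arguments tag_of_ord {n} k c.

Section HeffterSpaceFromPacking.
Variables (F : finFieldType) (v : nat) (phi : F -> nat) (n : nat) (B : 'I_n -> {set F}).
Hypotheses (hq : #|F| = (2 * v + 1)%N) (hv : odd v) (hphi : sq_iso v phi)
  (hB : heffter_diff_packing v phi B).
Local Notation S := (nzsquares F).
Local Notation m := (\sum_(i < n) #|B i|)%N.
Local Notation tag_of c := (tag_of_ord (fun i => #|B i|) c).

Definition packing_class (c : 'I_m) : {set {set F}} :=
  dilate_class phi (B (tag (tag_of c))) (tagged (tag_of c)).

Definition packing_class_size (c : 'I_m) : nat := #|B (tag (tag_of c))|.

Lemma heffter_space_packing_class :
  heffter_space S packing_class packing_class_size.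
Proof.
case: hB => B_sub _ B_transversal B_sum; split.
- apply: halfset_nzsquares; last by rewrite (card_nzsquares hphi) hq addn1.
  by apply: (oppr1_notin_nzsquares hphi); rewrite // hq addn1 /= oddM.
- move=> c; have [k_dvd_v B_tr] := B_transversal (tag (tag_of c)).
  exact: heffter_system_dilate_class hphi (B_sub _) k_dvd_v B_tr (ltn_ord _) (B_sum _).
move=> c1 c2 b1 b2 x y /imsetP[g1 /setIdP[g1S /eqP g1E] ->].
move=> /imsetP[g2 /setIdP[g2S /eqP g2E] ->] {b1 b2} xy xb1 yb1 xb2 yb2.
have [iE gE] := dilate_packing_pair_unique hphi hB g1S g2S xy xb1 yb1 xb2 yb2.
suff tagE : tag_of c1 = tag_of c2.
  by rewrite /packing_class tagE gE (bij_inj (tag_of_ord_bij _) tagE).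
move: g1E g2E; rewrite gE; case: (tag_of c1) iE => i1 j1; case: (tag_of c2) => i2 j2 /=.
by move=> iE; subst i2 => j1E j2E; congr Tagged; apply: val_inj; rewrite /= -j1E -j2E.
Qed.

Lemma card_packing_class_size s :
  #|[set c | packing_class_size c == s]| = (\sum_(i < n | #|B i| == s) #|B i|)%N.
Proof. exact: card_tag_of_ord_size. Qed.

Lemma packing_class_distinct_partial_sums :
  (forall i, has_distinct_partial_sums (B i)) ->
  forall c b, b \in packing_class c -> has_distinct_partial_sums b.
Proof.
move=> B_ps c _ /imsetP[g /setIdP[gS _] ->].
exact: dilate_distinct_partial_sums (nzsquares_neq0 gS) (B_ps _).
Qed.

End HeffterSpaceFromPacking.

Arguments packing_class {F} phi {n} B c.
Arguments packing_class_size {F n} B c.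

Theorem theorem4p3 (F : finFieldType) (v : nat) (hq : #|F| = (2 * v + 1)%N)
    (hv : odd v) (phi : F -> nat) (hphi : sq_iso v phi)
    (n : nat) (B : 'I_n -> {set F})
    (hB : heffter_diff_packing v phi B) :
  (exists (P : 'I_(\sum_(i < n) #|B i|) -> {set {set F}})
          (K : 'I_(\sum_(i < n) #|B i|) -> nat),
     heffter_space (nzsquares F) P K /\
     (forall s : nat,
        #|[set c | K c == s]| = (\sum_(i < n | #|B i| == s) #|B i|)%N)) /\
  ((forall i, has_distinct_partial_sums (B i)) ->
   exists (P : 'I_(\sum_(i < n) #|B i|) -> {set {set F}})
          (K : 'I_(\sum_(i < n) #|B i|) -> nat),
     [/\ heffter_space (nzsquares F) P K,
         (forall s : nat,
            #|[set c | K c == s]| = (\sum_(i < n | #|B i| == s) #|B i|)%N) &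
         (forall c b, b \in P c -> has_distinct_partial_sums b)]).
Proof.
have space := heffter_space_packing_class hq hv hphi hB.
have sizes := card_packing_class_size B.
split; first by exists (packing_class phi B), (packing_class_size B).
move=> B_ps; exists (packing_class phi B), (packing_class_size B).
by split=> //; apply: packing_class_distinct_partial_sums.
Qed.
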